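(* Let $\mathcal{A}$ be a pOC with state set $Q$ and let $p,q\in Q$. If $\mathrm{Pre}^*(q(0))\cap\mathrm{Post}^*(p(1))$ is finite, then $$|\mathrm{Pre}^*(q(0))\cap\mathrm{Post}^*(p(1))|\le|Q|^2\cdot(|Q|+2).$$
   Context: A pOC is $\mathcal{A}=(Q,\delta^{=0},\delta^{>0},P^{=0},P^{>0})$ with the following components. - $\delta^{>0}\subseteq Q\times\{-1,0,1\}\times Q$ are the positive rules and $\delta^{=0}\subseteq Q\times\{0,1\}\times Q$ are the zero rules. Every state has both kinds of outgoing rule. - $P^{>0}$ and $P^{=0}$ are positive probability distributions over the outgoing rules of each state. The Markov chain $\mathcal{M}_\mathcal{A}$ on configurations $p(i)\in Q\times\mathbb{N}_0$ has the following transitions: - $p(0)\to q(c)$ iff $(p,c,q)\in\delta^{=0}$; - for $i\ge1$, $p(i)\to q(i+c)$ iff $(p,c,q)\in\delta^{>0}$. $\mathrm{Pre}^*(C)$ is the set of configurations from which $C$ is reachable in $\mathcal{M}_\mathcal{A}$. $\mathrm{Post}^*(C)$ is the set of configurations reachable from $C$. *)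

From mathcomp Require Import all_boot all_order all_algebra.
From Stdlib Require Import Relations.
Set Implicit Arguments. Unset Strict Implicit. Unset Printing Implicit Defensive.
Import GRing.Theory Num.Theory.

(* A probabilistic one-counter automaton (pOC).  Rules are triples (p,c,q)
   with c an integer counter update; they are given as boolean predicates. *)
Record pOC (Q : finType) := POC {
  zero_rule : Q -> int -> Q -> bool;
  pos_rule  : Q -> int -> Q -> bool;
  zero_prob : Q -> int -> Q -> rat;
  pos_prob  : Q -> int -> Q -> rat
}.

Definition updates_pos : seq int := [:: (-1)%R; 0%R; 1%R].
Definition updates_zero : seq int := [:: 0%R; 1%R].

Definition wf_pOC (Q : finType) (A : pOC Q) : Prop :=
  (forall p c q, pos_rule A p c q -> c \in updates_pos) /\
  (forall p c q, zero_rule A p c q -> c \in updates_zero) /\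
  (forall p, exists c q, pos_rule A p c q) /\
  (forall p, exists c q, zero_rule A p c q) /\
  (forall p c q, pos_rule A p c q -> 0 < pos_prob A p c q)%R /\
  (forall p, \sum_(c <- updates_pos) \sum_(q : Q | pos_rule A p c q)
                 pos_prob A p c q = 1)%R /\
  (forall p c q, zero_rule A p c q -> 0 < zero_prob A p c q)%R /\
  (forall p, \sum_(c <- updates_zero) \sum_(q : Q | zero_rule A p c q)
                 zero_prob A p c q = 1)%R.

Definition config (Q : finType) := (Q * nat)%type.

Definition step (Q : finType) (A : pOC Q) (x y : config Q) : Prop :=
  let: (p, i) := x in let: (q, j) := y in
  if i == 0%N then exists c : int, zero_rule A p c q /\ (j%:Z = c)%R
  else exists c : int, pos_rule A p c q /\ (j%:Z = i%:Z + c)%R.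

Definition reach (Q : finType) (A : pOC Q) : relation (config Q) :=
  clos_refl_trans (config Q) (step A).

Definition PrePost (Q : finType) (A : pOC Q) (p q : Q) (x : config Q) : Prop :=
  reach A x (q, 0%N) /\ reach A (p, 1%N) x.

Definition finite_card (Q : finType) (S : config Q -> Prop) (n : nat) : Prop :=
  exists s : seq (config Q), uniq s /\ (forall x, x \in s <-> S x) /\ size s = n.

From mathcomp Require Import all_boot all_order all_algebra.
From mathcomp Require Import zify.
From Stdlib Require Import Relations.
Set Implicit Arguments. Unset Strict Implicit. Unset Printing Implicit Defensive.

(* Every configuration r(k) of Pre*(q(0)) ∩ Post*(p(1)) has k <= |Q|.  A run
   p(1) ->* r(k) climbs through every level 1..k, and the last visit of each
   level is followed by a run that stays positive up to the next level.  If
   k > |Q|, two of these last visits at levels a < b share a state, and the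
   positive segment between them can be repeated, so p(1) ->* r(k + m d)
   for every m.  Symmetrically, the first visits of the levels of a run
   r(k) ->* q(0) give r(k + m d') ->* q(0).  Thus Pre*(q(0)) ∩ Post*(p(1))
   would contain r(k + m d d') for all m, hence be infinite.  Counting the
   configurations with counter at most |Q| gives the bound. *)

Section PositiveRuns.

Variables (Q : finType) (A : pOC Q).
Hypothesis pos_update : forall p c q, pos_rule A p c q -> c \in updates_pos.
Hypothesis zero_update : forall p c q, zero_rule A p c q -> c \in updates_zero.

Lemma step_counter a i b j : step A (a, i) (b, j) ->
  (i = 0 /\ j <= 1) \/ (0 < i /\ j <= i.+1 /\ i <= j.+1).
Proof.
rewrite /step; case: eqP => [->|i_neq0] [c [rule_c j_eq]].
- left; split => //.
  by move: (zero_update rule_c); rewrite !inE => /orP[] /eqP c_eq; subst c; lia.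
- right; move: (pos_update rule_c).
  by rewrite !inE => /orP[/eqP c_eq|/orP[] /eqP c_eq]; subst c; lia.
Qed.

Definition pos_step (x y : config Q) := step A x y /\ 0 < x.2.
Definition pos_reach := clos_refl_trans (config Q) pos_step.

Lemma pos_reach_reach x y : pos_reach x y -> reach A x y.
Proof.
elim => [x0 y0 [st _]|x0|x0 y0 z0 _ xy _ yz]; [exact: rt_step|exact: rt_refl|].
exact: rt_trans xy yz.
Qed.

(* Runs that never test the counter for zero are invariant under translation. *)
Lemma pos_reach_shift m x y :
  pos_reach x y -> pos_reach (x.1, x.2 + m) (y.1, y.2 + m).
Proof.
elim => [[a i] [b j] []|x0|x0 y0 z0 _ xy _ yz]; last 2 first.
- exact: rt_refl.
- exact: rt_trans xy yz.
rewrite /step /=; case: eqP => [->//|i_neq0] [c [rule_c j_eq]] i_gt0.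
apply: rt_step; split => /=; last lia.
have -> : (i + m == 0) = false by apply/eqP; lia.
by exists c; split => //; lia.
Qed.

Lemma pos_reach_iter_up s a d : pos_reach (s, a) (s, a + d) ->
  forall m, pos_reach (s, a) (s, a + m * d).
Proof.
move=> cycle; elim => [|m IH]; first by rewrite addn0; exact: rt_refl.
apply: rt_trans IH _; have -> : a + m.+1 * d = a + d + m * d by lia.
exact: (pos_reach_shift (m * d) cycle).
Qed.

Lemma pos_reach_iter_down s a d : pos_reach (s, a + d) (s, a) ->
  forall m, pos_reach (s, a + m * d) (s, a).
Proof.
move=> cycle; elim => [|m IH]; first by rewrite addn0; exact: rt_refl.
apply: rt_trans _ IH; have -> : a + m.+1 * d = a + d + m * d by lia.
exact: (pos_reach_shift (m * d) cycle).
Qed.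

Lemma preorder_chain (T : Type) (R : T -> T -> Prop) (h : nat -> T) lo hi :
  (forall x, R x x) -> (forall x y z, R x y -> R y z -> R x z) ->
  (forall l, lo <= l -> l < hi -> R (h l) (h l.+1)) ->
  forall a b, lo <= a -> a <= b -> b <= hi -> R (h a) (h b).
Proof.
move=> refl trans link a; elim => [|b IH] lo_a a_b b_hi.
  by have -> : a = 0 by lia.
case: (ltnP a b.+1) => a_b'; last by have -> : b.+1 = a by lia.
apply: trans (IH _ _ _) (link _ _ _); lia.
Qed.

(* A run p(1) ->* r(k) yields an up ladder by taking, for each level l, the
   state at its last visit; a run r(k) ->* q(0) yields a down ladder by taking
   the state at the first visit of each level. *)
Definition up_ladder (f : nat -> Q) k :=
  forall l, 0 < l -> l < k -> pos_reach (f l, l) (f l.+1, l.+1).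

Definition down_ladder (g : nat -> Q) k :=
  forall l, l < k -> pos_reach (g l.+1, l.+1) (g l, l).

Lemma up_ladder_reach f k a b :
  up_ladder f k -> 0 < a -> a <= b -> b <= k -> pos_reach (f a, a) (f b, b).
Proof.
move=> ladder; apply: (preorder_chain (h := fun l => (f l, l))) => //.
- by move=> x; exact: rt_refl.
- by move=> x y z; exact: rt_trans.
Qed.

Lemma down_ladder_reach g k a b :
  down_ladder g k -> a <= b -> b <= k -> pos_reach (g b, b) (g a, a).
Proof.
move=> ladder; apply: (preorder_chain (R := fun x y => pos_reach y x)
  (h := fun l => (g l, l)) (lo := 0)) => //.
- by move=> x; exact: rt_refl.
- by move=> x y z xy yz; exact: rt_trans yz xy.
- by move=> l _; exact: ladder.
Qed.

Lemma reach_up_ladder p x : reach A (p, 1) x -> 0 < x.2 ->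
  exists f, [/\ reach A (p, 1) (f 1, 1), up_ladder f x.2 & f x.2 = x.1].
Proof.
move=> px; elim: (clos_rt_rtn1 _ _ _ _ px) => [|[b i] [c j] st run IH] /= j_gt0.
  by exists (fun=> p); split => [|l|]; [exact: rt_refl|rewrite /=; lia|].
have pc : reach A (p, 1) (c, j).
  exact: rt_trans (clos_rtn1_rt _ _ _ _ run) (rt_step _ _ _ _ st).
case: (step_counter st) => [[_ j_le1]|[i_gt0 [j_le i_le]]].
  have j1 : j = 1 by lia.
  by subst j; exists (fun=> c); split => // l; lia.
have [f [pf ladder fi]] := IH i_gt0; rewrite /= in ladder fi.
exists (fun l => if l == j then c else f l); split; last by rewrite eqxx.
- by case: eqP => [j1|_] //; rewrite -j1 in pc.
- move=> l l_gt0 l_lt; have -> : (l == j) = false by apply/eqP; lia.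
  case: (eqVneq l.+1 j) => [lj|l_neq]; last by apply: ladder => //; lia.
  apply: (rt_trans _ _ _ (b, i)); last by rewrite lj; apply: rt_step; split.
  by rewrite -fi; apply: up_ladder_reach ladder _ _ _; lia.
Qed.

Lemma reach_down_ladder q x : reach A x (q, 0) ->
  exists g, [/\ reach A (g 0, 0) (q, 0), down_ladder g x.2 & g x.2 = x.1].
Proof.
move=> xq; move: (clos_rt_rt1n _ _ _ _ xq); move E : (q, 0) => z run.
elim: run E => [x0 <-|[a i] [b j] z0 st run IH] /=.
  by exists (fun=> q); split => [|l|]; [exact: rt_refl|lia|].
move=> E; subst z0.
have aq : reach A (a, i) (q, 0).
  exact: rt_trans (rt_step _ _ _ _ st) (clos_rt1n_rt _ _ _ _ run).
case: (step_counter st) => [[i0 _]|[i_gt0 [j_le i_le]]].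
  by subst i; exists (fun=> a); split => // l; lia.
have [g [gq ladder gj]] := IH erefl; rewrite /= in ladder gj.
exists (fun l => if l == i then a else g l); split; last by rewrite eqxx.
- by have -> : (0 == i) = false by apply/eqP; lia.
- move=> l l_lt; have -> : (l == i) = false by apply/eqP; lia.
  case: (eqVneq l.+1 i) => [li|l_neq]; last by apply: ladder; lia.
  apply: (rt_trans _ _ _ (b, j)); first by rewrite li; apply: rt_step; split.
  by rewrite -gj; apply: down_ladder_reach ladder _ _; lia.
Qed.

Lemma exists_repeat_window (h : nat -> Q) base :
  exists a b, [/\ base <= a, a < b, b <= base + #|Q| & h a = h b].
Proof.
pose F := fun i : 'I_#|Q|.+1 => h (base + i).
have : ~~ injectiveb F.
  by apply/negP => /injectiveP F_inj; move: (leq_card _ F_inj); rewrite card_ord ltnn.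
case/injectivePn => i [j] i_neq_j Fij.
have := ltn_ord i; have := ltn_ord j.
case: (ltngtP i j) => [ij|ji|/val_inj ij]; last by rewrite ij eqxx in i_neq_j.
- by exists (base + i), (base + j); split => //; lia.
- by exists (base + j), (base + i); split => //; lia.
Qed.

Lemma reach_pump_up p r k : #|Q| < k -> reach A (p, 1) (r, k) ->
  exists2 d, 0 < d & forall m, reach A (p, 1) (r, k + m * d).
Proof.
move=> Q_lt_k pr; have [|f [pf ladder fk]] := reach_up_ladder pr; first by rewrite /=; lia.
rewrite /= in ladder fk.
have [a [b [a_gt0 a_lt_b b_le fab]]] := exists_repeat_window f 1.
exists (b - a) => [|m]; first lia.
have cycle : pos_reach (f a, a) (f a, a + (b - a)).
  by rewrite subnKC 1?ltnW // {2}fab; apply: up_ladder_reach ladder _ _ _; lia.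
have to_a : pos_reach (f 1, 1) (f a, a) by apply: up_ladder_reach ladder _ _ _; lia.
have to_r : pos_reach (f a, a) (r, k) by rewrite -fk; apply: up_ladder_reach ladder _ _ _; lia.
apply: rt_trans pf (pos_reach_reach (rt_trans _ _ _ _ _ to_a _)).
exact: rt_trans (pos_reach_iter_up cycle m) (pos_reach_shift (m * (b - a)) to_r).
Qed.

Lemma reach_pump_down q r k : #|Q| < k -> reach A (r, k) (q, 0) ->
  exists2 d, 0 < d & forall m, reach A (r, k + m * d) (q, 0).
Proof.
move=> Q_lt_k rq; have [g [gq ladder gk]] := reach_down_ladder rq.
rewrite /= in ladder gk.
have [a [b [_ a_lt_b b_le gab]]] := exists_repeat_window g 0.
exists (b - a) => [|m]; first lia.
have cycle : pos_reach (g a, a + (b - a)) (g a, a).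
  by rewrite subnKC 1?ltnW // {1}gab; apply: down_ladder_reach ladder _ _; lia.
have from_a : pos_reach (g a, a) (g 0, 0) by apply: down_ladder_reach ladder _ _; lia.
have from_r : pos_reach (r, k) (g a, a) by rewrite -gk; apply: down_ladder_reach ladder _ _; lia.
apply: rt_trans (pos_reach_reach (rt_trans _ _ _ _ _ _ from_a)) gq.
exact: rt_trans (pos_reach_shift (m * (b - a)) from_r) (pos_reach_iter_down cycle m).
Qed.

End PositiveRuns.

Lemma finite_card_counter_bounded (Q : finType) (S : config Q -> Prop) n :
  finite_card S n -> exists B, forall x, S x -> x.2 <= B.
Proof.
move=> [s [_ [mem_s _]]]; exists (\max_(y <- s) y.2) => x /mem_s x_s.
exact: (leq_bigmax_seq (F := snd) (P := predT) _ x_s isT).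
Qed.

Lemma finite_card_leq (Q : finType) (S : config Q -> Prop) n N :
  finite_card S n -> (forall x, S x -> x.2 < N) -> n <= #|Q| * N.
Proof.
move=> [s [uniq_s [mem_s <-]]] bounded.
have : size s <= size [seq (y.1, val y.2) | y <- enum {: Q * 'I_N}].
  apply: uniq_leq_size => // x x_s; have x2_lt := bounded x ((mem_s x).1 x_s).
  by apply/mapP; exists (x.1, Ordinal x2_lt); [rewrite mem_enum|case: x {x_s} x2_lt].
by rewrite size_map -cardE card_prod card_ord.
Qed.

Theorem mainTheorem6 (Q : finType) (A : pOC Q) (p q : Q) (n : nat) :
  wf_pOC A ->
  finite_card (PrePost A p q) n ->
  (n <= #|Q| ^ 2 * (#|Q| + 2))%N.
Proof.
move=> [pos_update [zero_update _]] fin.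
have counter_le : forall x, PrePost A p q x -> x.2 < #|Q|.+1.
  move=> [r k] [rq pr] /=; rewrite ltnNge; apply/negP => Q_lt_k.
  have [d1 d1_gt0 up] := reach_pump_up pos_update zero_update Q_lt_k pr.
  have [d2 d2_gt0 down] := reach_pump_down pos_update zero_update Q_lt_k rq.
  have [B bounded] := finite_card_counter_bounded fin.
  have pumped : PrePost A p q (r, k + B.+1 * (d1 * d2)).
    split; first by have := down (B.+1 * d1); rewrite -mulnA.
    by have := up (B.+1 * d2); rewrite -mulnA [d2 * _]mulnC.
  by move: (bounded _ pumped) => /=; nia.
apply: leq_trans (finite_card_leq fin counter_le) _.
by case: #|Q| => [|c] //; nia.
Qed.
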